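(* Let $(\Omega,\mathcal F,\mathbb P)$ be either an atomless probability space or the equiprobable space $(\{1,\dots,m\},2^{\{1,\dots,m\}},\mathbb P)$ with $\mathbb P(\{k\})=1/m$. Let $\mathcal P_1,\dots,\mathcal P_n$ be nonempty sets of probability measures on $(\Omega,\mathcal F)$, all absolutely continuous with respect to $\mathbb P$, and let $\alpha_1,\dots,\alpha_n\in(0,1)$. Fix a bounded measurable $X$. Suppose that $\mathrm d\mathbb Q/\mathrm d\mathbb P$ is decreasing in $X$ for every $\mathbb Q\in\mathcal P_1$ and increasing in $X$ for every $\mathbb Q\in\mathcal P_i$, $i=2,\dots,n$. Let $x^*=\mathop{\square}_{i=1}^n\sup_{\mathbb Q\in\mathcal P_i}\mathrm{VaR}^{\mathbb Q}_{\alpha_i}(X)$ and suppose the optimal allocation exists in the sense that $x^*>-\infty$ and there is $(A_1,\dots,A_n)\in\Pi_n$ with $\sup_{\mathbb Q\in\mathcal P_i}\mathbb Q(A_i\cap\{X>x^*\})\le\alpha_i$ for all $i$ (so that $X_i=(X-x^* )\mathds 1_{A_i}+x^*/n$ is an optimal allocation). Then such an optimal composition $(A_1^*,\dots,A_n^* )\in\Pi_n$ can be chosen so that $A_1^*$ is a tail event of $X$, meaning $X(\omega)\ge X(\omega')$ for all $\omega\in A_1^*$ and $\omega'\notin A_1^*$.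
   Context: For a probability $\mathbb Q$ and $\alpha\in(0,1)$, $\mathrm{VaR}^{\mathbb Q}_\alpha(X)=\inf\{x\in\mathbb R:\mathbb Q(X\ge x)\le\alpha\}$. Inf-convolution: $\mathop{\square}_{i=1}^n\rho_i(X)=\inf\{\sum_i\rho_i(X_i): X_i$ bounded measurable, $\sum_iX_i=X\}$. $\Pi_n=\{(A_1,\dots,A_n)\in\mathcal F^n:\bigcup_iA_i=\Omega\}$. ''$\mathrm d\mathbb Q/\mathrm d\mathbb P$ is decreasing (resp. increasing) in $X$'' means the Radon–Nikodym density is a decreasing (resp. increasing) function of $X$. *)

From HB Require Import structures.
From mathcomp Require Import all_boot all_order all_algebra.
From mathcomp Require Import all_classical all_reals all_analysis.
Set Implicit Arguments. Unset Strict Implicit. Unset Printing Implicit Defensive.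
Import Order.TTheory GRing.Theory Num.Theory.
Local Open Scope classical_set_scope.
Local Open Scope ring_scope.

Section defs.
Context {d : measure_display} {T : measurableType d} {R : realType}.

Definition atomless (P : probability T R) : Prop :=
  forall A : set T, measurable A -> (0 < P A)%E ->
    exists B : set T, [/\ measurable B, B `<=` A, (0 < P B)%E & (P B < P A)%E].

Definition equiprobable (P : probability T R) : Prop :=
  exists m : nat, [/\ exists e : 'I_m -> T, bijective e,
    forall A : set T, measurable A &
    forall w : T, P [set w] = ((m%:R)^-1)%:E].

Definition VaR (Q : probability T R) (a : R) (Y : T -> R) : \bar R :=
  ereal_inf [set x%:E | x in [set x : R | (Q [set w | (x <= Y w)%R] <= a%:E)%E]].

Definition rhoVaR (Ps : set (probability T R)) (a : R) (Y : T -> R) : \bar R :=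
  ereal_sup [set VaR Q a Y | Q in Ps].

Definition bounded_mfun (Y : T -> R) : Prop :=
  measurable_fun setT Y /\ exists M : R, forall w, `|Y w| <= M.

Definition infconv (n : nat) (rho : 'I_n -> (T -> R) -> \bar R) (X : T -> R)
  : \bar R :=
  ereal_inf [set (\sum_(i < n) rho i (Xs i))%E | Xs in
     [set Xs : 'I_n -> T -> R | (forall i, bounded_mfun (Xs i)) /\
                                forall w, \sum_(i < n) Xs i w = X w]].

Definition Pi_n (n : nat) (A : 'I_n -> set T) : Prop :=
  (forall i, measurable (A i)) /\ forall w : T, exists i, A i w.

(* dQ/dP admits a version that is a decreasing (resp. increasing)
   function of X: f w = h (X w) with h nonincreasing (resp. nondecreasing)
   on the range of X. *)
Definition density_of (P Q : probability T R) (f : T -> R) : Prop :=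
  [/\ measurable_fun setT f, forall w, 0 <= f w &
      forall A, measurable A -> Q A = (\int[P]_(w in A) (f w)%:E)%E].

Definition density_decreasing_in (P Q : probability T R) (X : T -> R) : Prop :=
  exists f, density_of P Q f /\ forall w w', X w <= X w' -> f w' <= f w.

Definition density_increasing_in (P Q : probability T R) (X : T -> R) : Prop :=
  exists f, density_of P Q f /\ forall w w', X w <= X w' -> f w <= f w'.

Definition tail_event (X : T -> R) (A : set T) : Prop :=
  forall w w', A w -> ~ A w' -> X w' <= X w.

End defs.

From HB Require Import structures.
From mathcomp Require Import all_boot all_order all_algebra.
From mathcomp Require Import all_classical all_reals all_analysis.
From mathcomp Require Import measurable_realfun lra.
Import Order.TTheory GRing.Theory Num.Theory.
Local Open Scope classical_set_scope.
Local Open Scope ring_scope.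

(* Put B = {X > x*} and D = A_1 ∩ B.  Under either hypothesis on P, every mass
   P(E) <= P(S) is attained by a measurable subset of S (Sierpiński's theorem in
   the atomless case, counting in the equiprobable one).  Hence there is a tail
   event C ⊆ B of X with P(C) = P(D): the part of B above a P-quantile of X on B,
   plus a piece of the corresponding level set.  The sets C \ D and D \ C have
   the same P-mass and X is larger on the first, so giving C to agent 1 trades
   D \ C for C \ D, which cannot increase Q(A_1 ∩ B) when dQ/dP decreases in X.
   Finally D \ C is cut into pieces G_i with P(G_i) <= P((C \ D) ∩ A_i), handed
   to the agents i >= 2 in exchange for (C \ D) ∩ A_i; since their densities
   increase in X, this cannot increase their Q-mass on B either.  Outside B the
   allocation does not matter. *)

Section fine_probability.
Context {d : measure_display} {T : measurableType d} {R : realType}.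
Implicit Types (Q : probability T R) (A B : set T).

Lemma probability_fineE Q A : measurable A -> Q A = (fine (Q A))%:E.
Proof. by move=> mA; rewrite fineK // fin_num_measure. Qed.

Lemma fine_probability_ge0 Q A : 0 <= fine (Q A).
Proof. exact: fine_ge0. Qed.

Lemma fine_probability_le1 Q A : measurable A -> fine (Q A) <= 1.
Proof.
by move=> mA; rewrite -lee_fin -probability_fineE //; exact: probability_le1.
Qed.

Lemma le_fine_probability Q A B : measurable A -> measurable B -> A `<=` B ->
  fine (Q A) <= fine (Q B).
Proof.
move=> mA mB AB; rewrite -lee_fin -!probability_fineE //.
by apply: le_measure; rewrite ?inE.
Qed.

Lemma fine_probabilityU Q A B : measurable A -> measurable B -> A `&` B = set0 ->
  fine (Q (A `|` B)) = fine (Q A) + fine (Q B).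
Proof.
move=> mA mB AB0; apply/EFin_inj.
rewrite -probability_fineE ?measureU ?EFinD -?probability_fineE //.
exact: measurableU.
Qed.

Lemma fine_probabilityU2 Q A B : measurable A -> measurable B ->
  fine (Q (A `|` B)) <= fine (Q A) + fine (Q B).
Proof.
move=> mA mB; rewrite -lee_fin EFinD -!probability_fineE ?measureU2 //.
exact: measurableU.
Qed.

Lemma fine_probabilityDI Q A B : measurable A -> measurable B ->
  fine (Q (A `\` B)) = fine (Q A) - fine (Q (A `&` B)).
Proof.
move=> mA mB; apply/EFin_inj; rewrite EFinB -!probability_fineE ?measureD //.
- by rewrite ltey_eq fin_num_measure.
- exact: measurableI.
- exact: measurableD.
Qed.

Lemma fine_probabilityD Q A B : measurable A -> measurable B -> B `<=` A ->
  fine (Q (A `\` B)) = fine (Q A) - fine (Q B).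
Proof. by move=> mA mB BA; rewrite fine_probabilityDI // setIidr. Qed.

Lemma fine_probability_bigcup_le Q (F : (set T)^nat) r :
  (forall k, measurable (F k)) -> (forall k, F k `<=` F k.+1) ->
  (forall k, fine (Q (F k)) <= r) -> fine (Q (\bigcup_k F k)) <= r.
Proof.
move=> mF FS Fr.
have ndF : nondecreasing_seq F by apply/nondecreasing_seqP => k; exact/subsetPset.
have mU : measurable (\bigcup_k F k) by exact: bigcupT_measurable.
have QF := nondecreasing_cvg_mu (mu := Q) mF mU ndF.
rewrite -lee_fin -probability_fineE // -(cvg_lim _ QF) //.
apply: lime_le; first by apply/cvg_ex; exists (Q (\bigcup_k F k)).
by apply: nearW => k /=; rewrite probability_fineE // lee_fin.
Qed.

Lemma fine_probability_bigcap_ge Q (F : (set T)^nat) r :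
  (forall k, measurable (F k)) -> (forall k, F k.+1 `<=` F k) ->
  (forall k, r <= fine (Q (F k))) -> r <= fine (Q (\bigcap_k F k)).
Proof.
move=> mF FS rF.
have niF : nonincreasing_seq F by apply/nonincreasing_seqP => k; exact/subsetPset.
have mI : measurable (\bigcap_k F k) by exact: bigcapT_measurable.
have QF0 : (Q (F 0%N) < +oo)%E by rewrite ltey_eq fin_num_measure.
have QF := nonincreasing_cvg_mu (mu := Q) QF0 mF mI niF.
rewrite -lee_fin -probability_fineE // -(cvg_lim _ QF) //.
apply: lime_ge; first by apply/cvg_ex; exists (Q (\bigcap_k F k)).
by apply: nearW => k /=; rewrite probability_fineE // lee_fin.
Qed.

End fine_probability.

Section density.
Context {d : measure_display} {T : measurableType d} {R : realType}.

Lemma separated_density_le {P Q : probability T R} {f : T -> R} {E F : set T} :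
  density_of P Q f -> measurable E -> measurable F ->
  (forall e w, E e -> F w -> f e <= f w) -> fine (P E) <= fine (P F) ->
  fine (Q E) <= fine (Q F).
Proof.
move=> [mf f0 QE] mE mF fEF.
rewrite -!lee_fin -!probability_fineE // => PEF.
have mfD D : measurable D -> measurable_fun D (EFin \o f : T -> \bar R).
  by move=> mD; apply: (measurable_funS measurableT) => //; exact/measurable_EFinP.
rewrite !QE //.
have [F0|/set0P [w0 Fw0]] := eqVneq F set0.
  have PE0 : P E = 0%E.
    by apply/le_anti; rewrite measure_ge0 andbT -(measure0 P) -F0.
  rewrite null_set_integral //=; last exact: mfD.
  by apply: integral_ge0 => w _; rewrite lee_fin.
pose s := inf (f @` F).
have s_lb w : F w -> s <= f w.
  by move=> Fw; apply: ge_inf; [exists 0 => _ [? _ <-] | exists w].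
have s_ub e : E e -> f e <= s.
  by move=> Ee; apply: lb_le_inf; [exists (f w0), w0 | move=> _ [w Fw <-]; exact: fEF].
have s0 : 0 <= s by apply: lb_le_inf; [exists (f w0), w0 | move=> _ [w _ <-]].
apply: (@le_trans _ _ (\int[P]_(w in E) s%:E))%E.
  apply: ge0_le_integral => [//|w _||//|w /s_ub]; rewrite ?lee_fin //.
  exact: mfD.
apply: (@le_trans _ _ (\int[P]_(w in F) s%:E))%E.
  by rewrite !integral_cst // lee_wpmul2l ?lee_fin.
apply: ge0_le_integral => [//|w _||//|w /s_lb]; rewrite ?lee_fin //.
exact: mfD.
Qed.

End density.

Section splittable.
Context {d : measure_display} {T : measurableType d} {R : realType}.

(* The target mass is given by a
   set E rather than by a real number, so that the equiprobable space, where
   only multiples of 1/m occur, qualifies as well. *)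
Definition splittable (P : probability T R) := forall S E : set T,
  measurable S -> measurable E -> fine (P E) <= fine (P S) ->
  exists G, [/\ measurable G, G `<=` S & fine (P G) = fine (P E)].

Lemma splittable_cover {P : probability T R} {I : eqType} {E : I -> set T}
    {s : seq I} {F : set T} :
  splittable P -> uniq s -> s != [::] ->
  (forall i, measurable (E i)) -> measurable F ->
  fine (P F) <= fine (P (\big[setU/set0]_(i <- s) E i)) ->
  exists G : I -> set T,
    (forall i, [/\ measurable (G i), G i `<=` F & fine (P (G i)) <= fine (P (E i))]) /\
    F `<=` \big[setU/set0]_(i <- s) G i.
Proof.
move=> splitP + + mE; elim: s F => [//|i s IH] F /andP[i_notin_s uniq_s] _ mF.
have mEs : measurable (\big[setU/set0]_(j <- s) E j) by exact: bigsetU_measurable.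
rewrite big_cons => PF.
have [PFi|PiF] := lerP (fine (P F)) (fine (P (E i))).
  exists (fun j => if j == i then F else set0); split; last first.
    by move=> w Fw; rewrite big_cons eqxx; left.
  by move=> j; case: eqP => [->|_]; split; rewrite ?measure0 ?fine_probability_ge0.
have [H [mH HF PH]] := splitP _ _ mF (mE i) (ltW PiF).
have s0 : s != [::].
  apply: contraTneq PiF => s0; rewrite -leNgt (le_trans PF) //.
  by rewrite s0 big_nil setU0.
have PFH : fine (P (F `\` H)) <= fine (P (\big[setU/set0]_(j <- s) E j)).
  by rewrite fine_probabilityD // PH lerBlDl (le_trans PF) ?fine_probabilityU2.
have [G [GP GF]] := IH (F `\` H) uniq_s s0 (measurableD mF mH) PFH.
exists (fun j => if j == i then H else G j); split.
  move=> j; case: eqP => [->|_]; first by split => //; rewrite PH.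
  by have [mG GFH PG] := GP j; split => // w /GFH [].
move=> w Fw; rewrite big_cons eqxx.
have [Hw|nHw] := pselect (H w); [by left | right].
rewrite (eq_big_seq G); first exact: GF.
by move=> j js; rewrite ifN //; apply: contraNneq i_notin_s => <-.
Qed.

End splittable.

Lemma bounded_sums_lower_bound_le0 {R : realType} (a : nat -> R) (x M : R) :
  (forall n, \sum_(i < n) a i <= M) -> (forall n, x <= a n) -> x <= 0.
Proof.
move=> sumM xa; rewrite leNgt; apply/negP => x0.
have M0 : 0 <= M by have := sumM 0%N; rewrite big_ord0.
have [n Mn] : exists n : nat, M / x < n%:R.
  by exists (Num.Def.archi_bound (M / x)); apply: archi_boundP; rewrite divr_ge0 // ltW.
have : x *+ n <= M.
  apply: le_trans (sumM n); rewrite -[in leLHS](card_ord n) -sumr_const.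
  by apply: ler_sum => i _.
by rewrite -mulr_natr; rewrite ltr_pdivrMr in Mn; lra.
Qed.

Section atomless.
Context {d : measure_display} {T : measurableType d} {R : realType}.
Variable P : probability T R.

Lemma exists_half_sup (cand : set (set T)) : cand `<=` measurable -> cand !=set0 ->
  exists2 H, cand H & forall H', cand H' -> fine (P H') <= 2 * fine (P H).
Proof.
move=> mcand [H0 cH0].
pose V := [set fine (P H) | H in cand].
have supV : has_sup V.
  split; first by exists (fine (P H0)), H0.
  by exists 1 => _ [H /mcand mH <-]; exact: fine_probability_le1.
have V_ub H : cand H -> fine (P H) <= sup V.
  by move=> cH; apply: sup_upper_bound => //; exists H.
have [V0|V0] := lerP (sup V) 0.
  exists H0 => // H /V_ub PHV; apply: le_trans PHV (le_trans V0 _).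
  by rewrite mulr_ge0 ?fine_probability_ge0.
have [_ [H cH <-] PHV] := sup_adherent (divr_gt0 V0 (ltr0Sn R 1)) supV.
by exists H => // H' /V_ub; lra.
Qed.

Hypothesis P_atomless : atomless P.

Lemma atomless_half_subset {A} : measurable A -> 0 < fine (P A) ->
  exists H, [/\ measurable H, H `<=` A, 0 < fine (P H) & fine (P H) * 2 <= fine (P A)].
Proof.
move=> mA PA0; have PA0E : (0 < P A)%E by rewrite probability_fineE // lte_fin.
have [B [mB BA]] := P_atomless A mA PA0E.
rewrite (probability_fineE _ _ mB) (probability_fineE _ _ mA) !lte_fin => PB0 PBA.
have [PB2|PB2] := lerP (fine (P B) * 2) (fine (P A)); first by exists B.
exists (A `\` B); split => //; first exact: measurableD.
- by rewrite fine_probabilityD // subr_gt0.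
- by rewrite fine_probabilityD //; lra.
Qed.

Lemma atomless_small_subset {A e} : measurable A -> 0 < fine (P A) -> 0 < e ->
  exists H, [/\ measurable H, H `<=` A, 0 < fine (P H) & fine (P H) <= e].
Proof.
move=> mA PA0 e0.
have halving k : exists H,
    [/\ measurable H, H `<=` A, 0 < fine (P H) & fine (P H) * 2 ^+ k <= 1].
  elim: k => [|k [H [mH HA PH0 PHk]]].
    by exists A; split; rewrite // expr0 mulr1 fine_probability_le1.
  have [H' [mH' H'H PH'0 PH'H]] := atomless_half_subset mH PH0.
  exists H'; split => //; first exact: subset_trans H'H HA.
  by rewrite exprS mulrA (le_trans _ PHk) // ler_wpM2r ?exprn_ge0.
pose k := Num.Def.archi_bound e^-1.
have ek : e^-1 < 2 ^+ k.
  apply: lt_le_trans (archi_boundP _) _; first by rewrite invr_ge0 ltW.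
  by rewrite -natrX ler_nat ltnW // ltn_expl.
have [H [mH HA PH0 PHk]] := halving k.
exists H; split => //.
rewrite -(ler_pM2r (exprn_gt0 k (ltr0Sn R 1))) (le_trans PHk) // ltW //.
by move: ek; rewrite -(ltr_pM2l e0) mulfV // gt_eqF.
Qed.

End atomless.

Section greedy.
Context {d : measure_display} {T : measurableType d} {R : realType}.
Variables (P : probability T R) (S : set T) (q : R).

Let admissible G H := [/\ measurable H, H `<=` S `\` G & fine (P H) <= q - fine (P G)].

Lemma exists_greedy_step G : exists H, fine (P G) <= q ->
  admissible G H /\ forall H', admissible G H' -> fine (P H') <= 2 * fine (P H).
Proof.
have [PGq|_] := boolP (fine (P G) <= q); last by exists set0.
have [H GH Hmax] : exists2 H, admissible G H &
    forall H', admissible G H' -> fine (P H') <= 2 * fine (P H).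
  apply: exists_half_sup; first by move=> H [].
  by exists set0; split => //; rewrite measure0 subr_ge0.
by exists H.
Qed.

Hypotheses (P_atomless : atomless P) (mS : measurable S).
Hypotheses (q0 : 0 <= q) (qS : q <= fine (P S)).
Variable h : set T -> set T.
Hypothesis h_greedy : forall G, fine (P G) <= q ->
  admissible G (h G) /\ forall H, admissible G H -> fine (P H) <= 2 * fine (P (h G)).

Let Gs n := iter n (fun G => G `|` h G) set0.

Lemma greedy_iter_admissible n :
  [/\ measurable (Gs n), Gs n `<=` S & fine (P (Gs n)) <= q].
Proof.
elim: n => [|n [mG GS PG]]; first by split => //=; rewrite measure0.
have [[mH HSG PH] _] := h_greedy _ PG.
split => /=; [exact: measurableU | by move=> w [/GS|/HSG []] |].
rewrite fine_probabilityU // -?lerBrDl //.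
by apply/seteqP; split => // w [Gw /HSG []].
Qed.

Lemma greedy_iter_mass n : fine (P (Gs n)) = \sum_(i < n) fine (P (h (Gs i))).
Proof.
elim: n => [|n IH]; first by rewrite big_ord0 measure0.
have [mG _ PG] := greedy_iter_admissible n; have [[mH HSG _] _] := h_greedy _ PG.
rewrite big_ord_recr -IH /= fine_probabilityU //.
by apply/seteqP; split => // w [Gw /HSG []].
Qed.

(* Were the union G of the iterates short of q, a set H of small positive mass
   would stay admissible at every step, so every added piece would have mass at
   least P(H) / 2 while their total stays bounded. *)
Lemma greedy_limit :
  exists G, [/\ measurable G, G `<=` S & fine (P G) = q].
Proof.
set G := \bigcup_n Gs n.
have mG : measurable G.
  by apply: bigcupT_measurable => n; case: (greedy_iter_admissible n).
have GS : G `<=` S.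
  by move=> w [n _]; case: (greedy_iter_admissible n) => _ + _; apply.
have PGq : fine (P G) <= q.
  apply: fine_probability_bigcup_le => [n|n w Gnw|n].
  - by case: (greedy_iter_admissible n).
  - by left.
  - by case: (greedy_iter_admissible n).
exists G; split => //; apply/eqP; rewrite eq_le PGq /= leNgt; apply/negP => PGq'.
have PSG0 : 0 < fine (P (S `\` G)).
  by rewrite fine_probabilityD // subr_gt0 (lt_le_trans PGq').
have qG0 : 0 < q - fine (P G) by rewrite subr_gt0.
have [H [mH HSG PH0 PHq]] :=
  atomless_small_subset P P_atomless (measurableD mS mG) PSG0 qG0.
suff : fine (P H) <= 0 by rewrite leNgt PH0.
apply: (@bounded_sums_lower_bound_le0 _ (fun n => 2 * fine (P (h (Gs n)))) _ 2) => n.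
  rewrite -mulr_sumr -greedy_iter_mass ler_piMr // fine_probability_le1 //.
  by case: (greedy_iter_admissible n).
have [mGn GnS PGn] := greedy_iter_admissible n; apply: (h_greedy _ PGn).2; split => //.
  by move=> w /HSG [Sw nGw]; split => // Gnw; apply: nGw; exists n.
apply: le_trans PHq _; rewrite lerD2l lerN2.
by apply: le_fine_probability => // w Gnw; exists n.
Qed.

End greedy.

Lemma atomless_splittable {d} {T : measurableType d} {R : realType}
  (P : probability T R) : atomless P -> splittable P.
Proof.
move=> P_atomless S E mS mE PES.
have [h h_greedy] := choice (exists_greedy_step P S (fine (P E))).
exact: greedy_limit P_atomless mS (fine_probability_ge0 _ _) PES h h_greedy.
Qed.

Section equiprobable.
Context {d : measure_display} {T : measurableType d} {R : realType}.
Variables (P : probability T R) (m : nat) (e : 'I_m -> T) (e' : T -> 'I_m).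
Hypotheses (ee' : cancel e e') (e'e : cancel e' e).
Hypotheses (mT : forall A : set T, measurable A)
  (P1 : forall w, P [set w] = (m%:R^-1)%:E).

Lemma uniform_fineE (A : set T) :
  fine (P A) = #|[pred i | `[< A (e i) >]]|%:R / m%:R.
Proof.
have {1}-> : A = \big[setU/set0]_(i < m | `[< A (e i) >]) [set e i].
  apply/seteqP; split => [w Aw|w].
    by rewrite (bigD1 (e' w)) /= ?e'e; [left | exact/asboolP].
  by elim/big_rec: _ => [[]|i x /asboolP Aei IH [/= ->|/IH]].
have tI : trivIset setT (fun i => [set e i]).
  by move=> i j _ _ [w [/= -> /(congr1 e')]]; rewrite !ee'.
rewrite measure_bigsetU_ord // (eq_bigr (fun=> (m%:R^-1)%:E)) => [|i _]; last exact: P1.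
rewrite sumEFin /=.
rewrite (eq_bigl (fun i => i \in [pred i | `[< A (e i) >]])) => [|i] //.
by rewrite sumr_const mulr_natl.
Qed.

Lemma uniform_splittable : splittable P.
Proof.
move=> S E _ _; rewrite !uniform_fineE => PES.
set IS := [pred i | `[< S (e i) >]]; set IE := [pred i | `[< E (e i) >]].
have IES : (#|IE| <= #|IS|)%N.
  have [m0|m0] := posnP m.
    apply: leq_trans (max_card IE) _; rewrite card_ord.
    exact: leq_trans (eq_leq m0) (leq0n _).
  by move: PES; rewrite ler_pM2r ?invr_gt0 ?ltr0n // ler_nat.
have [s [s_uniq s_size sIS]] := card_geqP IES.
exists [set w | e' w \in s]; split => //.
  by move=> w /= /sIS; rewrite inE /= e'e.
rewrite !uniform_fineE -s_size -(card_uniqP s_uniq).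
by congr (_%:R / _); apply: eq_card => i; rewrite inE /= ee' asboolb.
Qed.

End equiprobable.

Lemma equiprobable_splittable {d} {T : measurableType d} {R : realType}
  (P : probability T R) : equiprobable P -> splittable P.
Proof.
by case=> m [[e [e' ee' e'e]] mT P1]; exact: uniform_splittable ee' e'e mT P1.
Qed.

Section tail_event.
Context {d : measure_display} {T : measurableType d} {R : realType}.
Context {X : T -> R} {B : set T}.

Lemma tail_eventU_level (W : set T) t : tail_event X B ->
  W `<=` B `&` [set w | t <= X w] ->
  tail_event X ((B `&` [set w | t < X w]) `|` W).
Proof.
move=> tB WB w w' Cw Cw'.
have [Bw tw] : B w /\ t <= X w by case: Cw => [[Bw /ltW]|/WB].
have [Bw'|Bw'] := pselect (B w'); last exact: tB Bw Bw'.
by rewrite (le_trans _ tw) // leNgt; apply/negP => tw'; apply: Cw'; left.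
Qed.

Hypotheses (mX : measurable_fun setT X) (bX : exists M, forall w, `|X w| <= M).
Hypothesis mB : measurable B.

Let mBge t : measurable (B `&` [set w | t <= X w]).
Proof.
apply: measurableI => //; rewrite -[Y in measurable Y]setTI.
have -> : [set w | t <= X w] = X @^-1` `[t, +oo[.
  by apply/seteqP; split => w /=; rewrite in_itv /= andbT.
by apply: mX => //; exact: measurable_itv.
Qed.

Let mBgt t : measurable (B `&` [set w | t < X w]).
Proof.
apply: measurableI => //; rewrite -[Y in measurable Y]setTI.
have -> : [set w | t < X w] = X @^-1` `]t, +oo[.
  by apply/seteqP; split => w /=; rewrite in_itv /= andbT.
by apply: mX => //; exact: measurable_itv.
Qed.

Lemma mass_gt_le (P : probability T R) t p :
  (forall s, t < s -> fine (P (B `&` [set w | s <= X w])) <= p) ->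
  fine (P (B `&` [set w | t < X w])) <= p.
Proof.
move=> Pp.
have -> : B `&` [set w | t < X w] = \bigcup_k (B `&` [set w | t + k.+1%:R^-1 <= X w]).
  apply/seteqP; split => [w [Bw /= /ltr_add_invr [k /ltW kX]]|w [k _ [Bw /= kX]]].
    by exists k.
  by split => //=; apply: lt_le_trans kX; rewrite ltrDl invr_gt0.
apply: fine_probability_bigcup_le => [//|k w [Bw /= kX]|k].
  by split => //=; apply: le_trans kX; rewrite lerD2l lef_pV2 ?posrE // ler_nat.
by apply: Pp; rewrite ltrDl invr_gt0.
Qed.

Lemma mass_ge_ge (P : probability T R) t p :
  (forall s, s < t -> p <= fine (P (B `&` [set w | s <= X w]))) ->
  p <= fine (P (B `&` [set w | t <= X w])).
Proof.
move=> Pp.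
have -> : B `&` [set w | t <= X w] = \bigcap_k (B `&` [set w | t - k.+1%:R^-1 <= X w]).
  apply/seteqP; split => [w [Bw /= tX] k _|w Bw]; first split => //=.
    by apply: le_trans tX; rewrite gerBl invr_ge0.
  have [Bw0 _] := Bw 0%N I; split => //=; rewrite leNgt; apply/negP.
  move=> /ltr_add_invr [k]; rewrite -ltrBrDr => kX.
  by have [_ /=] := Bw k I; rewrite leNgt kX.
apply: fine_probability_bigcap_ge => [//|k w [Bw /= kX]|k].
  by split => //=; apply: le_trans kX; rewrite lerD2l lerN2 lef_pV2 ?posrE // ler_nat.
by apply: Pp; rewrite ltrBlDr ltrDl invr_gt0.
Qed.

Lemma exists_quantile (P : probability T R) p : 0 < p -> p <= fine (P B) ->
  exists t, fine (P (B `&` [set w | t < X w])) <= p <=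
            fine (P (B `&` [set w | t <= X w])).
Proof.
move=> p0 pB; have [M XM] := bX.
pose S := [set s | p <= fine (P (B `&` [set w | s <= X w]))].
have S_M : S (- M).
  apply: (le_trans pB); apply: le_fine_probability => // w Bw; split => //=.
  by move: (XM w); rewrite ler_norml => /andP[].
have S_ub : ubound S M.
  move=> s Ss; rewrite leNgt; apply/negP => Ms.
  suff BX0 : B `&` [set w | s <= X w] = set0.
    by move: Ss; rewrite /S /= BX0 measure0 /= leNgt p0.
  apply/seteqP; split => // w [_ /= sX]; move: (XM w); rewrite ler_norml.
  by case/andP => _ XwM; move: (lt_le_trans Ms sX); rewrite ltNge XwM.
have supS : has_sup S by split; [exists (- M) | exists M].
exists (sup S); apply/andP; split.
  apply: mass_gt_le => s Ss; rewrite leNgt; apply/negP => /ltW pS.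
  by move: (sup_upper_bound supS pS); rewrite leNgt Ss.
apply: mass_ge_ge => s sS; have sS0 : 0 < sup S - s by rewrite subr_gt0.
have [s' Ss' ss'] := sup_adherent sS0 supS; rewrite opprB addrCA subrr addr0 in ss'.
apply: le_trans Ss' _; apply: le_fine_probability => // w [Bw /= s'X].
by split => //=; apply: le_trans s'X; exact: ltW.
Qed.

Lemma splittable_tail_subset {P : probability T R} {D : set T} : splittable P ->
  tail_event X B -> measurable D -> D `<=` B ->
  exists C, [/\ measurable C, C `<=` B, tail_event X C & fine (P C) = fine (P D)].
Proof.
move=> splitP tB mD DB.
have [PD0|PD0] := lerP (fine (P D)) 0.
  exists set0; split => [//|//|? ? []|].
  by rewrite measure0; apply/le_anti; rewrite PD0 fine_probability_ge0.
have [t /andP[PU PV]] := exists_quantile P _ PD0 (le_fine_probability _ _ _ mD mB DB).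
set U := B `&` [set w | t < X w] in PU *.
set V := B `&` [set w | t <= X w] in PV *.
have mU : measurable U := mBgt t.
have mV : measurable V := mBge t.
have UV : U `<=` V by move=> w [Bw /ltW].
have [U' [mU' U'D PU']] := splitP _ _ mD mU PU.
have PDU : fine (P (D `\` U')) <= fine (P (V `\` U)).
  by rewrite !fine_probabilityD // PU' lerD2r.
have [W [mW WVU PW]] := splitP _ _ (measurableD mV mU) (measurableD mD mU') PDU.
exists (U `|` W); split.
- exact: measurableU.
- by move=> w [[]|/WVU [[]]].
- by apply: tail_eventU_level => // w /WVU [].
- rewrite fine_probabilityU //; last by apply/seteqP; split => // w [Uw /WVU []].
  by rewrite PW fine_probabilityD // PU' addrC subrK.
Qed.

End tail_event.

Section exchange.
Context {d : measure_display} {T : measurableType d} {R : realType}.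
Context {P : probability T R} {X : T -> R} {B : set T} {n : nat}.
Context {A : 'I_n -> set T} {i0 : 'I_n} {C : set T}.
Hypotheses (mB : measurable B) (mA : forall i, measurable (A i)).
Hypotheses (mC : measurable C) (CB : C `<=` B) (tC : tail_event X C).
Hypothesis PC : fine (P C) = fine (P (A i0 `&` B)).

Local Notation D := (A i0 `&` B).
Let mD : measurable D := measurableI _ _ (mA i0) mB.
#[local] Hint Resolve mD : core.

Lemma exchange_mass : fine (P (C `\` D)) = fine (P (D `\` C)).
Proof. by rewrite !fine_probabilityDI // PC (setIC C). Qed.

Lemma exchange_decreasing_le Q : density_decreasing_in P Q X ->
  fine (Q C) <= fine (Q D).
Proof.
move=> [f [df f_decr]].
have -> : fine (Q C) = fine (Q (C `\` D)) + fine (Q (C `&` D)).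
  by rewrite fine_probabilityDI // subrK.
have -> : fine (Q D) = fine (Q (D `\` C)) + fine (Q (C `&` D)).
  by rewrite fine_probabilityDI // (setIC C) subrK.
rewrite lerD2r.
apply: (separated_density_le df); rewrite ?exchange_mass //; try exact: measurableD.
by move=> e w [Ce _] [_ nCw]; apply: f_decr; exact: tC Ce nCw.
Qed.

Context {G : 'I_n -> set T}.
Hypotheses (mG : forall i, measurable (G i)) (GDC : forall i, G i `<=` D `\` C).
Hypothesis PG : forall i, fine (P (G i)) <= fine (P ((C `\` D) `&` A i)).

Lemma exchange_increasing_le i Q : density_increasing_in P Q X ->
  fine (Q (((A i `\` C) `|` G i `|` ~` B) `&` B)) <= fine (Q (A i `&` B)).
Proof.
move=> [f [df f_incr]].
set K := (A i `&` B) `\` C; set Ei := (C `\` D) `&` A i.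
have mK : measurable K by apply: measurableD => //; exact: measurableI.
have mEi : measurable Ei by apply: measurableI => //; exact: measurableD.
have QG : fine (Q (G i)) <= fine (Q Ei).
  apply: (separated_density_le df) => // g e Gg [[Ce _] _].
  by apply: f_incr; apply: tC Ce _; case: (GDC _ _ Gg).
have -> : ((A i `\` C) `|` G i `|` ~` B) `&` B = K `|` G i.
  apply/seteqP; split => [w [[[[Aw nCw]|Gw]|//] Bw]|w [[[Aw Bw] nCw]|Gw]].
  - by left.
  - by right.
  - by split => //; left; left.
  - by have [[_ Bw] _] := GDC _ _ Gw; split => //; left; right.
apply: (le_trans (fine_probabilityU2 _ _ _ mK (mG i))).
apply: (@le_trans _ _ (fine (Q K) + fine (Q Ei))); first by rewrite lerD2l.
rewrite -fine_probabilityU //; last first.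
  by apply/seteqP; split => // w [[_ nCw] [[Cw _] _]].
apply: le_fine_probability; [exact: measurableU | exact: measurableI |].
by move=> w [[]|[[/CB Bw _] Aw]].
Qed.

End exchange.

Section tail_exchange.
Context {d : measure_display} {T : measurableType d} {R : realType}.

Lemma splittable_tail_exchange {P : probability T R} {X : T -> R} {B : set T} {n}
    {A : 'I_n -> set T} (i0 i1 : 'I_n) :
  splittable P -> bounded_mfun X -> measurable B -> tail_event X B ->
  Pi_n A -> i1 != i0 ->
  exists A' : 'I_n -> set T, [/\ Pi_n A', tail_event X (A' i0),
    forall Q, density_decreasing_in P Q X ->
      fine (Q (A' i0 `&` B)) <= fine (Q (A i0 `&` B)) &
    forall i Q, i != i0 -> density_increasing_in P Q X ->
      fine (Q (A' i `&` B)) <= fine (Q (A i `&` B))].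
Proof.
move=> splitP [mX bX] mB tB [mA covA] i10.
set D := A i0 `&` B.
have mD : measurable D by exact: measurableI.
have [C [mC CB tC PC]] :=
  splittable_tail_subset mX bX mB splitP tB mD (@subIsetr _ _ _).
pose s := [seq i <- enum 'I_n | i != i0].
have mem_s i : (i \in s) = (i != i0) by rewrite mem_filter mem_enum andbT.
pose E i := (C `\` D) `&` A i.
have mE i : measurable (E i) by apply: measurableI => //; exact: measurableD.
have PF : fine (P (D `\` C)) <= fine (P (\big[setU/set0]_(i <- s) E i)).
  rewrite -(exchange_mass mB mA mC PC); apply: le_fine_probability.
  - exact: measurableD.
  - exact: bigsetU_measurable.
  move=> w [Cw nDw]; rewrite -bigcup_seq; have [i Aiw] := covA w.
  exists i => //=; rewrite mem_s; apply/eqP => ii0.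
  by apply: nDw; rewrite /D -ii0; split => //; exact: CB.
have s_uniq : uniq s by rewrite filter_uniq // enum_uniq.
have s0 : s != [::] by apply/eqP => s0; move: (mem_s i1); rewrite s0 i10.
have [G [GP GF]] := splittable_cover splitP s_uniq s0 mE (measurableD mD mC) PF.
exists (fun i => if i == i0 then C else (A i `\` C) `|` G i `|` ~` B); split.
- split=> [i|w]; first case: ifP => _ //.
    have [mGi _ _] := GP i; apply: measurableU; last exact: measurableC.
    by apply: measurableU => //; exact: measurableD.
  have [Cw|nCw] := pselect (C w); first by exists i0; rewrite eqxx.
  have [Bw|nBw] := pselect (B w); last by exists i1; rewrite (negPf i10); right.
  have [i Aiw] := covA w; have [ii0|ii0] := eqVneq i i0; last first.
    by exists i; rewrite (negPf ii0); left; left.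
  have := GF w; rewrite -bigcup_seq => -[|j /=]; first by rewrite /D -ii0.
  by rewrite mem_s => ji0 Gjw; exists j; rewrite (negPf ji0); left; right.
- by rewrite eqxx.
- move=> Q dQ; rewrite eqxx (setIidl CB).
  exact: exchange_decreasing_le mB mA mC tC PC _ dQ.
- move=> i Q ii0 dQ; rewrite (negPf ii0).
  by apply: (exchange_increasing_le (i0 := i0) mB mA mC CB tC) dQ => j; case: (GP j).
Qed.

End tail_exchange.

Section threshold_event.
Context {d : measure_display} {T : measurableType d} {R : realType}.
Variable X : T -> R.
Local Open Scope ereal_scope.

Lemma measurable_ereal_gt z : measurable_fun setT X ->
  measurable [set w | z < (X w)%:E].
Proof.
move=> mX; rewrite -[Y in measurable Y]setTI.
have -> : [set w | z < (X w)%:E] = (EFin \o X) @^-1` `]z, +oo[.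
  by apply/seteqP; split => w /=; rewrite in_itv /= andbT.
have mEX : measurable_fun setT (EFin \o X : T -> \bar R) by exact/measurable_EFinP.
by apply: mEX => //; exact: emeasurable_itv.
Qed.

Lemma tail_event_ereal_gt z : tail_event X [set w | z < (X w)%:E].
Proof.
by move=> w w' /= zw /negP; rewrite -leNgt -lee_fin => /le_lt_trans/(_ zw)/ltW.
Qed.

End threshold_event.

Lemma ereal_sup_image_le {R : realType} {I} (S : set I) (f g : I -> \bar R) :
  (forall x, S x -> (f x <= g x)%E) -> (ereal_sup (f @` S) <= ereal_sup (g @` S))%E.
Proof.
move=> fg; apply: ge_ereal_sup => _ [x Sx <-].
by apply: le_trans (fg _ Sx) _; apply: ereal_sup_ubound; exists x.
Qed.

Theorem proposition8 (d : measure_display) (T : measurableType d) (R : realType)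
  (P : probability T R) (n : nat) (hn : (0 < n)%N)
  (Ps : 'I_n -> set (probability T R)) (alpha : 'I_n -> R) (X : T -> R) :
  atomless P \/ equiprobable P ->
  (forall i, Ps i !=set0) ->
  (forall i Q, Ps i Q -> Q `<< P) ->
  (forall i, 0 < alpha i < 1) ->
  bounded_mfun X ->
  (forall i Q, Ps i Q -> val i = 0%N -> density_decreasing_in P Q X) ->
  (forall i Q, Ps i Q -> val i <> 0%N -> density_increasing_in P Q X) ->
  let xstar := infconv (fun i => rhoVaR (Ps i) (alpha i)) X in
  (-oo < xstar)%E ->
  (exists A : 'I_n -> set T, Pi_n A /\
     forall i, (ereal_sup [set Q (A i `&` [set w | xstar < (X w)%:E]) | Q in Ps i]
                <= (alpha i)%:E)%E) ->
  exists A : 'I_n -> set T, [/\ Pi_n A,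
     forall i, (ereal_sup [set Q (A i `&` [set w | xstar < (X w)%:E]) | Q in Ps i]
                <= (alpha i)%:E)%E &
     forall i, val i = 0%N -> tail_event X (A i)].
Proof.
move=> hP _ _ _ hX hdec hinc xstar _ [A [PiA hA]].
set B := [set w | (xstar < (X w)%:E)%E].
have [n1|n2] := leqP n 1.
  exists A; split => // i i0 w w' _ Aw'; exfalso; apply: Aw'.
  have [j Ajw'] := PiA.2 w'; suff -> : i = j by [].
  apply/val_inj; rewrite i0; apply/esym/eqP; rewrite -leqn0 -ltnS.
  exact: leq_trans (ltn_ord j) n1.
pose i0 : 'I_n := Ordinal hn; pose i1 : 'I_n := Ordinal n2.
have splitP : splittable P.
  by case: hP => [/atomless_splittable|/equiprobable_splittable].
have mB : measurable B by apply: measurable_ereal_gt; case: hX.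
have [|A' [PiA' tA' le0 le1]] :=
  splittable_tail_exchange i0 i1 splitP hX mB (tail_event_ereal_gt _ _) PiA.
  by rewrite -val_eqE.
have mA'B i : measurable (A' i `&` B) by apply: measurableI => //; case: PiA'.
have mAB i : measurable (A i `&` B) by apply: measurableI => //; case: PiA.
exists A'; split => [//| i |i vi]; last by rewrite (_ : i = i0) //; exact: val_inj.
apply: le_trans (hA i); apply: ereal_sup_image_le => Q PQ.
rewrite (probability_fineE _ _ (mA'B i)) (probability_fineE _ _ (mAB i)) lee_fin.
have [ii0|ii0] := eqVneq i i0.
  by rewrite ii0 in PQ *; exact: le0 _ (hdec _ _ PQ erefl).
by apply/(le1 _ _ ii0)/(hinc _ _ PQ) => vi; move/eqP: ii0; apply; exact: val_inj.
Qed.
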